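(* Let $A=\mathbb{C}[x_1,\dots,x_M,\xi_1,\dots,\xi_N]$ be the free commutative superalgebra on even variables $x_1,\dots,x_M$ and odd variables $\xi_1,\dots,\xi_N$, and let $A^\circ=\mathbb{C}[x_1,\dots,x_M]$ be its quotient by the ideal generated by the odd variables. Let $q_1,\dots,q_n\in A$ be even elements with images $q_1^\circ,\dots,q_n^\circ\in A^\circ$. Assume: whenever $f_1^\circ,\dots,f_n^\circ\in A^\circ$ satisfy $\sum_i q_i^\circ f_i^\circ=0$, there exist $F^\circ_{ij}\in A^\circ$ with $F^\circ_{ij}=-F^\circ_{ji}$ and $f_i^\circ=\sum_jF^\circ_{ij}q_j^\circ$ for all $i$. Then whenever $f_1,\dots,f_n\in A$ satisfy $\sum_iq_if_i=0$, there exist $F_{ij}\in A$ with $F_{ij}=-F_{ji}$ ($i,j=1,\dots,n$) and $f_i=\sum_jF_{ij}q_j$ for all $i$. *)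

From HB Require Import structures.
From mathcomp Require Import all_boot all_order all_algebra.
From mathcomp Require Import complex.
From mathcomp Require Import Rstruct.
From mathcomp Require Import mpoly.
From Stdlib Require Reals.

Set Implicit Arguments.
Unset Strict Implicit.
Unset Printing Implicit Defensive.

Import Order.TTheory GRing.Theory Num.Theory.
Local Open Scope ring_scope.

Definition CC : Type := complex Rdefinitions.R.

Definition Aev (M : nat) := {mpoly CC[M]}.

(* The free commutative superalgebra A = C[x_1..x_M, xi_1..xi_N]:
   an element is written uniquely as  sum_{S subset {1..N}} a_S xi_S,
   where xi_S = xi_{s_1} ... xi_{s_k} with s_1 < ... < s_k and a_S in A°. *)
Definition SA (M N : nat) := {ffun {set 'I_N} -> Aev M}.

(* sign of xi_T xi_U = sgn * xi_{T cup U} for disjoint T, U: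
   number of pairs (t,u) in T x U with u < t. *)
Definition ssign (N : nat) (T U : {set 'I_N}) : nat :=
  #|[set p : 'I_N * 'I_N | [&& p.1 \in T, p.2 \in U & (p.2 < p.1)%N]]|.

(* supercommutative multiplication: xi_i xi_j = - xi_j xi_i, xi_i^2 = 0. *)
Definition smul (M N : nat) (a b : SA M N) : SA M N :=
  [ffun S : {set 'I_N} => \sum_(T : {set 'I_N} | T \subset S)
      (-1) ^+ ssign T (S :\: T) * (a T * b (S :\: T))].

Definition sred (M N : nat) (a : SA M N) : Aev M := a set0.

Definition seven (M N : nat) (a : SA M N) : Prop :=
  forall S : {set 'I_N}, odd #|S| -> a S = 0.

From HB Require Import structures.
From mathcomp Require Import all_boot all_order all_algebra.
From mathcomp Require Import complex Rstruct mpoly.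
From mathcomp Require Import ring.

Set Implicit Arguments.
Unset Strict Implicit.
Unset Printing Implicit Defensive.

Import GRing.Theory Num.Theory.
Local Open Scope ring_scope.

(* Let J be the ideal of A generated by the odd variables, so that J^(N+1) = 0.
   If f is a syzygy of the q_i with f_i in J^k, then for |S| = k the
   xi_S-components of the f_i form a syzygy of the q_i° over A°, since the
   xi-free parts of the q_i are the only parts that reach degree k.  By
   hypothesis this reduced syzygy is given by skew-symmetric coefficients; put
   in degree k they define a Koszul syzygy g, and f - g is a syzygy in J^(k+1)
   (Koszul syzygies are syzygies because even elements are central). *)

Lemma disjoint_setDr (T : finType) (A B : {set T}) : [disjoint A & B :\: A].
Proof. by rewrite disjoint_sym; apply/setDidPl; rewrite setDDl setUid. Qed.

Lemma setDDK (T : finType) (A B : {set T}) : A \subset B -> B :\: (B :\: A) = A.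
Proof. by move=> sAB; rewrite setDDr setDv set0U; apply/setIidPr. Qed.

Lemma setUDK (T : finType) (A B : {set T}) : A \subset B -> A :|: (B :\: A) = B.
Proof. by move=> sAB; rewrite setDE setUIr setUCr setIT; apply/setUidPr. Qed.

Definition skew {I : Type} {V : zmodType} (F : I -> I -> V) :=
  forall i j, F i j = - F j i.

Lemma eq_oppr_eq0 (R : numFieldType) (V : lmodType R) (v : V) : v = - v -> v = 0.
Proof.
move=> vN; have : 2%:R *: v = 0 by rewrite scaler_nat mulr2n {1}vN addNr.
by move/eqP; rewrite scaler_eq0 pnatr_eq0 => /eqP.
Qed.

Lemma sum_skew_eq0 (R : numFieldType) (V : lmodType R) (I : finType)
    (F : I -> I -> V) :
  skew F -> \sum_i \sum_j F i j = 0.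
Proof.
move=> skewF; apply: (@eq_oppr_eq0 R V).
rewrite {1}exchange_big -sumrN; apply: eq_bigr => i _.
by rewrite -sumrN; apply: eq_bigr => j _; rewrite skewF.
Qed.

Section Signs.
Variable N : nat.
Implicit Types T U V S : {set 'I_N}.

Lemma ssignE T U :
  ssign T U = (\sum_(t in T) \sum_(u in U) ((u < t)%N : nat))%N.
Proof.
rewrite /ssign -sum1_card.
rewrite (eq_bigl (fun p => (p.1 \in T) && ((p.2 \in U) && (p.2 < p.1)%N)));
  last by move=> p; rewrite inE.
rewrite -(pair_big_dep (fun t => t \in T)
  (fun t u : 'I_N => (u \in U) && (u < t)%N) (fun _ _ => 1%N)).
apply: eq_bigr => t _; rewrite big_mkcondr; apply: eq_bigr => u _.
by case: (u < t)%N.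
Qed.

Lemma ssign0l S : ssign set0 S = 0%N.
Proof. by rewrite ssignE big_set0. Qed.

Lemma ssign0r S : ssign S set0 = 0%N.
Proof. by rewrite ssignE big1 // => t _; rewrite big_set0. Qed.

Lemma ssignUl T U V :
  [disjoint T & U] -> ssign (T :|: U) V = (ssign T V + ssign U V)%N.
Proof.
by move=> dTU; rewrite !ssignE -bigU //; apply: eq_bigl => t; rewrite !inE.
Qed.

Lemma ssignUr T U V :
  [disjoint T & U] -> ssign V (T :|: U) = (ssign V T + ssign V U)%N.
Proof.
move=> dTU; rewrite !ssignE -big_split; apply: eq_bigr => t _.
by rewrite -bigU //; apply: eq_bigl => u; rewrite !inE.
Qed.

Lemma ssign_add_swap T U :
  [disjoint T & U] -> (ssign T U + ssign U T)%N = (#|T| * #|U|)%N.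
Proof.
move=> dTU; rewrite !ssignE [X in (_ + X)%N]exchange_big -big_split /=.
rewrite -sum_nat_const; apply: eq_bigr => t tT.
rewrite -big_split -sum1_card /=; apply: eq_bigr => u uU.
have : t != u by apply: contraTneq uU => <-; rewrite (disjointFr dTU tT).
by rewrite -(inj_eq val_inj); case: ltngtP.
Qed.

Lemma odd_ssignC T U :
  [disjoint T & U] -> ~~ odd #|T| -> odd (ssign T U) = odd (ssign U T).
Proof.
move=> dTU /negbTE evT; have := congr1 odd (ssign_add_swap dTU).
by rewrite oddD oddM evT; case: (odd (ssign T U)); case: (odd (ssign U T)).
Qed.

Lemma ssign_cocycle T U V : [disjoint T & U] -> [disjoint U & V] ->
  (ssign T (U :|: V) + ssign U V)%N = (ssign (T :|: U) V + ssign T U)%N.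
Proof. by move=> dTU dUV; rewrite ssignUr // ssignUl // -addnA addnC. Qed.

End Signs.

Section Superalgebra.
Variables M N : nat.
Implicit Types (a b c : SA M N) (S T U : {set 'I_N}).

Lemma smulE a b S : smul a b S =
  \sum_(T : {set 'I_N} | T \subset S)
    (-1) ^+ ssign T (S :\: T) * (a T * b (S :\: T)).
Proof. by rewrite ffunE. Qed.

Lemma smulDl a b c : smul (a + b) c = smul a c + smul b c.
Proof.
apply/ffunP => S; rewrite !ffunE -big_split; apply: eq_bigr => T _.
by rewrite !ffunE mulrDl mulrDr.
Qed.

Lemma smulDr a b c : smul a (b + c) = smul a b + smul a c.
Proof.
apply/ffunP => S; rewrite !ffunE -big_split; apply: eq_bigr => T _.
by rewrite !ffunE !mulrDr.
Qed.

Lemma smul0l b : smul 0 b = 0.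
Proof. by apply/ffunP => S; rewrite !ffunE big1 // => T _; rewrite ffunE mul0r mulr0. Qed.

Lemma smul0r a : smul a 0 = 0.
Proof. by apply/ffunP => S; rewrite !ffunE big1 // => T _; rewrite ffunE !mulr0. Qed.

Lemma smulNl a b : smul (- a) b = - smul a b.
Proof.
apply/ffunP => S; rewrite !ffunE -sumrN; apply: eq_bigr => T _.
by rewrite !ffunE mulNr mulrN.
Qed.

Lemma smulNr a b : smul a (- b) = - smul a b.
Proof.
apply/ffunP => S; rewrite !ffunE -sumrN; apply: eq_bigr => T _.
by rewrite !ffunE !mulrN.
Qed.

Lemma smul_sumr (I : Type) (r : seq I) (P : pred I) (F : I -> SA M N) a :
  smul a (\sum_(i <- r | P i) F i) = \sum_(i <- r | P i) smul a (F i).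
Proof. exact: (big_morph (smul a) (smulDr a) (smul0r a)). Qed.

Lemma smulA : associative (@smul M N).
Proof.
move=> a b c; apply/ffunP => S; rewrite !ffunE.
under eq_bigr => T _ do rewrite ffunE !mulr_sumr.
under [RHS]eq_bigr => W _ do rewrite ffunE mulr_suml mulr_sumr.
rewrite [RHS](exchange_big_dep (fun T => T \subset S)) /=; last first.
  by move=> W T sWS sTW; apply: subset_trans sTW sWS.
apply: eq_bigr => T sTS.
rewrite [RHS](reindex_onto (fun U => T :|: U) (fun W => W :\: T)) /=; last first.
  by move=> W /andP[_ sTW]; rewrite setUDK.
apply: eq_big => [U | U sUST].
  rewrite subsetD subUset sTS subsetUl /= setDUl setDv set0U andbT.
  by rewrite (sameP setDidPl eqP).
move: (sUST); rewrite subsetD => /andP[_ dUT].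
have dTU : [disjoint T & U] by rewrite disjoint_sym.
rewrite setDUl setDv set0U (setDidPl dUT) setDDl.
set V := S :\: (T :|: U).
have dUV : [disjoint U & V] by rewrite /V -setDDl disjoint_setDr.
have sign_eq : (ssign T (S :\: T) + ssign U V = ssign (T :|: U) V + ssign T U)%N.
  by rewrite -{1}(setUDK sUST) setDDl -/V ssign_cocycle.
transitivity ((-1) ^+ (ssign T (S :\: T) + ssign U V) * (a T * b U * c V)).
  by rewrite exprD; ring.
by rewrite sign_eq exprD; ring.
Qed.

Lemma smulC a b : seven a -> smul a b = smul b a.
Proof.
move=> ev_a; apply/ffunP => S; rewrite !ffunE.
rewrite [RHS](reindex_onto (fun T => S :\: T) (fun T => S :\: T)) /=; last first.
  by move=> T sTS; rewrite setDDK.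
apply: eq_big => [T | T sTS].
  by apply/idP/andP => [sTS | [_ /eqP <-]]; rewrite subsetDl ?setDDK.
rewrite setDDK // [b _ * _]mulrC.
case oT: (odd #|T|); first by rewrite ev_a // !(mul0r, mulr0).
by rewrite -signr_odd odd_ssignC ?disjoint_setDr ?oT // signr_odd.
Qed.

(* [Jpow k a] : a lies in J^k, J being the ideal generated by the odd variables. *)
Definition Jpow (k : nat) a := forall S, (#|S| < k)%N -> a S = 0.

Lemma JpowW m k a : (m <= k)%N -> Jpow k a -> Jpow m a.
Proof. by move=> le_mk aJ S ltSm; apply: aJ; apply: leq_trans le_mk. Qed.

Lemma Jpow_eq0 k a : (N < k)%N -> Jpow k a -> a = 0.
Proof.
move=> lt_Nk aJ; apply/ffunP => S; rewrite ffunE; apply: aJ.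
by apply: leq_ltn_trans lt_Nk; rewrite -[X in (_ <= X)%N]card_ord max_card.
Qed.

Lemma smul_comp_Jpowl a b S : Jpow #|S| a -> smul a b S = a S * sred b.
Proof.
move=> aJ; rewrite smulE (bigD1 S) //= setDv ssign0r mul1r big1 ?addr0 //.
move=> T /andP[sTS nTS].
by rewrite aJ ?mul0r ?mulr0 // proper_card // properEneq nTS.
Qed.

Lemma smul_comp_Jpowr a b S : Jpow #|S| b -> smul a b S = sred a * b S.
Proof.
move=> bJ; rewrite smulE (bigD1 set0) ?sub0set //= ssign0l setD0 mul1r.
rewrite big1 ?addr0 // => T /andP[sTS nT0].
rewrite bJ ?mulr0 // cardsDS // ltn_subrL card_gt0 nT0.
by rewrite (leq_trans _ (subset_leq_card sTS)) // card_gt0.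
Qed.

Definition shom (k : nat) (c : {set 'I_N} -> Aev M) : SA M N :=
  [ffun S : {set 'I_N} => if #|S| == k then c S else 0].

Lemma Jpow_shom k (c : {set 'I_N} -> Aev M) : Jpow k (shom k c).
Proof. by move=> S ltSk; rewrite ffunE (ltn_eqF ltSk). Qed.

End Superalgebra.

Section Syzygies.
Variables (M N n : nat) (q : 'I_n -> SA M N).
Implicit Types f g : 'I_n -> SA M N.

Definition syzygy f := \sum_(i < n) smul (q i) (f i) = 0.

Definition koszul f := exists F : 'I_n -> 'I_n -> SA M N,
  skew F /\ forall i, f i = \sum_(j < n) smul (F i j) (q j).

Lemma syzygyB f g : syzygy f -> syzygy g -> syzygy (fun i => f i - g i).
Proof.
move=> syz_f syz_g; rewrite /syzygy.
under eq_bigr do rewrite smulDr smulNr.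
by rewrite big_split /= sumrN syz_f syz_g subrr.
Qed.

Lemma eq_koszul f g : (forall i, f i = g i) -> koszul f -> koszul g.
Proof. by move=> efg [F [skewF fF]]; exists F; split=> // i; rewrite -efg. Qed.

Lemma koszul0 : koszul (fun=> 0).
Proof.
exists (fun _ _ => 0); split=> [i j | i]; first by rewrite oppr0.
by rewrite big1 // => j _; rewrite smul0l.
Qed.

Lemma koszulD f g : koszul f -> koszul g -> koszul (fun i => f i + g i).
Proof.
move=> [F [skewF fF]] [G [skewG gG]].
exists (fun i j => F i j + G i j); split=> [i j | i].
  by rewrite skewF skewG opprD.
by rewrite fF gG -big_split; apply: eq_bigr => j _; rewrite smulDl.
Qed.

Hypothesis q_even : forall i, seven (q i).

Lemma koszul_syzygy f : koszul f -> syzygy f.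
Proof.
move=> [F [skewF fF]]; rewrite /syzygy.
under eq_bigr => i _ do rewrite fF smul_sumr.
pose Y i j := smul (F i j) (smul (q i) (q j)).
rewrite (eq_bigr (fun i => \sum_j Y i j)) => [|i _].
  apply: sum_skew_eq0 => i j.
  by rewrite /Y skewF smulNl (smulC _ (q_even i)).
by apply: eq_bigr => j _; rewrite smulA (smulC _ (q_even i)) -smulA.
Qed.

Hypothesis koszul_red : forall f0 : 'I_n -> Aev M,
  \sum_(i < n) sred (q i) * f0 i = 0 ->
  exists F0 : 'I_n -> 'I_n -> Aev M,
    (forall i j, F0 i j = - F0 j i) /\
    (forall i, f0 i = \sum_(j < n) F0 i j * sred (q j)).

Lemma syzygy_lift_step k f : (forall i, Jpow k (f i)) -> syzygy f ->
  exists2 G : 'I_n -> 'I_n -> SA M N, skew G &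
    forall i, Jpow k.+1 (f i - \sum_(j < n) smul (G i j) (q j)).
Proof.
move=> fJ syz_f.
have red_syz (S : {set 'I_N}) : #|S| = k -> \sum_i sred (q i) * f i S = 0.
  move=> cSk; have := congr1 (fun a : SA M N => a S) syz_f.
  rewrite /= sum_ffunE ffunE => {2}<-; apply: eq_bigr => i _.
  by rewrite smul_comp_Jpowr // cSk.
have red_koszul (S : {set 'I_N}) : exists F0 : 'I_n -> 'I_n -> Aev M,
    #|S| = k -> skew F0 /\ forall i, f i S = \sum_j F0 i j * sred (q j).
  have [cSk | nSk] := eqVneq #|S| k.
    by have [F0 F0P] := koszul_red (red_syz S cSk); exists F0.
  by exists (fun _ _ => 0) => cSk; rewrite cSk eqxx in nSk.
have [F0 F0P] := fin_all_exists red_koszul.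
pose G i j := shom k (fun S => F0 S i j).
exists G => [i j | i S ltSk].
  apply/ffunP => S; rewrite !ffunE.
  by case: eqP => [/F0P[skewF0 _] | _]; rewrite 1?skewF0 ?oppr0.
have GqS j : smul (G i j) (q j) S = G i j S * sred (q j).
  by apply: smul_comp_Jpowl; exact (JpowW (ltSk : (#|S| <= k)%N) (Jpow_shom _)).
rewrite !ffunE sum_ffunE (eq_bigr _ (fun j _ => GqS j)).
have [cSk | nSk] := eqVneq #|S| k.
  rewrite (proj2 (F0P S cSk) i) -sumrB big1 // => j _.
  by rewrite ffunE cSk eqxx subrr.
rewrite fJ ?big1 ?subr0 // => [j _ | ]; first by rewrite ffunE (negbTE nSk) mul0r.
by rewrite ltn_neqAle nSk -ltnS.
Qed.

Lemma koszul_syzygy_Jpow k f : (forall i, Jpow k (f i)) -> syzygy f -> koszul f.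
Proof.
move Ed : (N.+1 - k)%N => d; elim: d k f Ed => [|d IHd] k f Ed fJ syz_f.
  apply: eq_koszul koszul0 => i.
  by rewrite (Jpow_eq0 _ (fJ i)) // -subn_eq0 Ed.
have [G skewG liftJ] := syzygy_lift_step fJ syz_f.
pose g i := \sum_(j < n) smul (G i j) (q j).
have koszul_g : koszul g by exists G.
apply: (eq_koszul (fun i => subrK (g i) (f i))); apply: (koszulD _ koszul_g).
apply: (IHd k.+1 _ _ liftJ); first by rewrite subnS Ed.
exact: syzygyB syz_f (koszul_syzygy koszul_g).
Qed.

End Syzygies.

Theorem mainTheorem4 (M N n : nat) (q : 'I_n -> SA M N) :
  (forall i, seven (q i)) ->
  (forall f0 : 'I_n -> Aev M,
      \sum_(i < n) sred (q i) * f0 i = 0 ->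
      exists F0 : 'I_n -> 'I_n -> Aev M,
        (forall i j, F0 i j = - F0 j i) /\
        (forall i, f0 i = \sum_(j < n) F0 i j * sred (q j))) ->
  forall f : 'I_n -> SA M N,
    \sum_(i < n) smul (q i) (f i) = 0 ->
    exists F : 'I_n -> 'I_n -> SA M N,
      (forall i j, F i j = - F j i) /\
      (forall i, f i = \sum_(j < n) smul (F i j) (q j)).
Proof.
move=> q_even koszul_red f syz_f.
have fJ0 i : Jpow 0 (f i) by move=> S; rewrite ltn0.
exact (koszul_syzygy_Jpow q_even koszul_red fJ0 syz_f).
Qed.
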